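(* Let $(\Omega,\mathcal F,\Pr)$ be a probability space with filtration $\{\mathcal F_n\}_{n\ge0}$, and let $\{z_n\},\{a_n\},\{x_n\},\{y_n\}$ be non-negative adapted sequences with $\mathbb{E}[z_{n+1}\mid\mathcal F_n]\le(1+a_n)z_n+x_n-y_n$ a.s. Suppose $\sum_na_n<\infty$ a.s.; $|z_{n+1}-z_n|\le b_n(z_n+1)$ a.s. for a non-negative adapted sequence $\{b_n\}$ with $\sum_nb_n^2<\infty$ a.s.; and there is a constant $B\ge0$ such that $z_n>B$ implies $x_n-y_n\le -c_n(z_n-B)$, for a non-negative adapted sequence $\{c_n\}$ with $\sum_nc_n=\infty$ a.s. Assume in addition there is a constant $\eta>0$ with (A1) $\liminf_{n\to\infty} nc_n>\frac{\eta}{2}$; (A2) $\sum_n (n+1)^\eta(a_n^2+b_n)<\infty$ a.s. Then $\lim_{n\to\infty} n^{\eta/2} d(z_n,[0,B])=0$ a.s.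
   Context: For $z\in\mathbb R$ and an interval $Z\subset\mathbb R$, $d(z,Z)\doteq\inf_{\tilde z\in Z}|z-\tilde z|$. *)

From HB Require Import structures.
From mathcomp Require Import all_boot all_order all_algebra.
From mathcomp Require Import all_classical all_reals all_analysis.
From mathcomp Require Import measurable_realfun lebesgue_integral.
Set Implicit Arguments. Unset Strict Implicit. Unset Printing Implicit Defensive.
Import Order.TTheory GRing.Theory Num.Theory.
Local Open Scope classical_set_scope.
Local Open Scope ring_scope.

Definition dist_set {R : realType} (z : R) (Z : set R) : R :=
  inf [set `|z - t| | t in Z].

Definition is_filtration d (T : measurableType d) (F : nat -> set (set T)) : Prop :=
  [/\ (forall n, sigma_algebra setT (F n)),
      (forall n, F n `<=` measurable) &
      (forall n m, (n <= m)%N -> F n `<=` F m)].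

Definition measurable_wrt (T : Type) d' (U : measurableType d')
  (G : set (set T)) (f : T -> U) : Prop :=
  forall B, measurable B -> G (f @^-1` B).

(* g is a version of the conditional expectation E[X | G] of the
   non-negative random variable X (extended-real valued, since for
   non-negative X it always exists in [0, +oo]) *)
Definition is_cond_exp_nonneg d (T : measurableType d) (R : realType)
  (P : probability T R) (G : set (set T)) (X : T -> R) (g : T -> \bar R) : Prop :=
  [/\ measurable_wrt G g,
      (forall t, (0 <= g t)%E) &
      (forall A, G A -> (\int[P]_(t in A) g t = \int[P]_(t in A) (X t)%:E)%E)].

Definition nonneg_adapted d (T : measurableType d) (R : realType)
  (F : nat -> set (set T)) (u : nat -> T -> R) : Prop :=
  forall n, measurable_wrt (F n) (u n) /\ (forall t, 0 <= u n t).

(* Since [z_{n+1} >= z_n - b_n (z_n + 1)] and this lower bound is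
   F_n-measurable, it also bounds [E[z_{n+1} | F_n]] from below; with the
   recursion and the drift condition this yields, pathwise,
   [c_n (z_n - B) <= a_n z_n + b_n (z_n + 1)] whenever [z_n > B].
   As [sum b_n <= sum (n+1)^eta b_n < oo], the path is bounded by some [M], and
   after time [n] it can fall by at most [M sum_{k>=n} b_k = o(n^(-eta/2))].
   So if [n^(eta/2) (z_n - B) > e] for some large [n], then [z] stays above
   [B + (z_n - B)/2] from time [n] on, and the drift bound gives
   [sum c_k < oo], contradicting [sum c_k = oo]. *)

From HB Require Import structures.
From mathcomp Require Import all_boot all_order all_algebra.
From mathcomp Require Import all_classical all_reals all_analysis.
From mathcomp Require Import measurable_realfun lebesgue_integral.
From mathcomp Require Import ring lra.
Set Implicit Arguments. Unset Strict Implicit. Unset Printing Implicit Defensive.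
Import Order.TTheory GRing.Theory Num.Theory.
Local Open Scope classical_set_scope.
Local Open Scope ring_scope.

Section DistSet.
Variable R : realType.

Lemma dist_set_ge0 (z : R) (Z : set R) : 0 <= dist_set z Z.
Proof.
have [[t Zt]|nZ] := pselect (exists t, Z t).
  by apply: lb_le_inf; [exists `|z - t|, t | move=> _ [s _ <-]].
rewrite /dist_set (_ : Z = set0) ?image_set0 ?inf0 //.
by apply/seteqP; split => // t Zt; apply: nZ; exists t.
Qed.

Lemma dist_set_le (z t : R) (Z : set R) : Z t -> dist_set z Z <= `|z - t|.
Proof. by move=> Zt; apply: ge_inf; [exists 0 => _ [s _ <-] | exists t]. Qed.

End DistSet.

Section PartialSums.
Variable R : realType.
Implicit Types (v : nat -> R) (S : R).

Lemma sum_nat_tail_le v n m : (forall k, 0 <= v k) ->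
  \sum_(n <= k < m) v k <= \sum_(0 <= k < m) v k.
Proof.
move=> v0; have [nm|/ltnW mn] := leqP n m; last by rewrite big_geq // sumr_ge0.
by rewrite (big_cat_nat (leq0n n) nm) lerDr sumr_ge0.
Qed.

Lemma bounded_nneg_sum_tail_small v S : (forall k, 0 <= v k) ->
  (forall n, \sum_(0 <= k < n) v k <= S) ->
  forall e, 0 < e -> exists N, forall n m, (N <= n)%N -> \sum_(n <= k < m) v k <= e.
Proof.
move=> v0 vS e e0.
set E := [set \sum_(0 <= k < n) v k | n in [set: nat]].
have supE : has_sup E by split; [exists 0, 0%N; rewrite ?big_geq | exists S => _ [n _ <-]].
have [_ [N _ <-] hN] := sup_adherent e0 supE.
exists N => n m Nn; have [nm|/ltnW mn] := leqP n m; last by rewrite big_geq // ltW.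
have Em : \sum_(0 <= k < m) v k <= sup E by apply: (ub_le_sup supE.2); exists m.
have SNn : \sum_(0 <= k < N) v k <= \sum_(0 <= k < n) v k.
  by rewrite (big_cat_nat (leq0n N) Nn) lerDl sumr_ge0.
suff : \sum_(0 <= k < m) v k = \sum_(0 <= k < n) v k + \sum_(n <= k < m) v k by lra.
by rewrite (big_cat_nat (leq0n n) nm).
Qed.

Definition weighted_tails_vanish (p v : nat -> R) :=
  forall e, 0 < e -> exists N, forall n m, (N <= n)%N -> p n * \sum_(n <= k < m) v k <= e.

Lemma powR_weighted_tails_vanish (gam : R) v S : 0 <= gam -> (forall k, 0 <= v k) ->
  (forall n, \sum_(0 <= k < n) k.+1%:R `^ gam * v k <= S) ->
  weighted_tails_vanish (fun n => n%:R `^ gam) v.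
Proof.
move=> gam0 v0 vS e e0.
have w0 k : 0 <= k.+1%:R `^ gam * v k by rewrite mulr_ge0 ?powR_ge0.
have [N hN] := bounded_nneg_sum_tail_small w0 vS e0.
exists N => n m /(hN n m); apply: le_trans.
rewrite mulr_sumr; apply: ler_sum_nat => k /andP[nk _].
rewrite ler_wpM2r // ge0_ler_powR // ?nnegrE ?ler_nat // ltnW //.
Qed.

Lemma powR_weighted_psum_le (g1 g2 : R) v (w : nat -> R) S : 0 <= g1 <= g2 ->
  (forall k, 0 <= v k <= w k) ->
  (forall n, \sum_(0 <= k < n) k.+1%:R `^ g2 * w k <= S) ->
  forall n, \sum_(0 <= k < n) k.+1%:R `^ g1 * v k <= S.
Proof.
move=> /andP[_ g12] vw wS n; apply: le_trans (wS n); apply: ler_sum => k _.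
have [v0 vw_k] := andP (vw k).
by apply: ler_pM; rewrite ?powR_ge0 // ler_powR // ler1n.
Qed.

End PartialSums.

Section RelativeIncrements.
Variables (R : realType) (z b : nat -> R).
Hypotheses (z_ge0 : forall n, 0 <= z n) (b_ge0 : forall n, 0 <= b n)
  (incr : forall n, `|z n.+1 - z n| <= b n * (z n + 1)).

Lemma relative_increments_expR_bound n :
  z n + 1 <= (z 0%N + 1) * expR (\sum_(0 <= k < n) b k).
Proof.
elim: n => [|n IH]; first by rewrite big_geq // expR0 mulr1.
rewrite big_nat_recr //= expRD mulrA.
have zn1 : z n.+1 + 1 <= (z n + 1) * (1 + b n).
  have := ler_norm (z n.+1 - z n); have := incr n; lra.
apply: le_trans zn1 (ler_pM _ _ IH (expR_ge1Dx (b n))) => //.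
- by have := z_ge0 n; lra.
- by have := b_ge0 n; lra.
Qed.

Lemma relative_increments_descent M n m : (forall k, z k + 1 <= M) -> (n <= m)%N ->
  z n - M * \sum_(n <= k < m) b k <= z m.
Proof.
move=> zM; elim: m => [|m IH]; first by rewrite leqn0 => /eqP->; rewrite big_geq // mulr0 subr0.
rewrite leq_eqVlt => /orP[/eqP->|nm]; first by rewrite big_geq // mulr0 subr0.
have := IH nm; rewrite big_nat_recr //= mulrDr.
have : b m * (z m + 1) <= b m * M by rewrite ler_wpM2l.
have := ler_norm (z m - z m.+1); rewrite distrC; have := incr m; lra.
Qed.

End RelativeIncrements.

Section DriftTowardsInterval.
Variables (R : realType) (z a b c : nat -> R) (B A S : R).
Hypotheses (z_ge0 : forall n, 0 <= z n) (a_ge0 : forall n, 0 <= a n)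
  (b_ge0 : forall n, 0 <= b n) (c_ge0 : forall n, 0 <= c n) (B_ge0 : 0 <= B)
  (incr : forall n, `|z n.+1 - z n| <= b n * (z n + 1))
  (drift : forall n, B < z n -> c n * (z n - B) <= a n * z n + b n * (z n + 1))
  (sum_a_le : forall n, \sum_(0 <= k < n) a k <= A)
  (sum_b_le : forall n, \sum_(0 <= k < n) b k <= S)
  (sum_c_unbounded : forall C, exists n, C < \sum_(0 <= k < n) c k).

Let M := (z 0%N + 1) * expR S.

Let z_le_M n : z n + 1 <= M.
Proof.
apply: le_trans (relative_increments_expR_bound z_ge0 b_ge0 incr n) _.
by rewrite ler_wpM2l ?ler_expR //; have := z_ge0 0%N; lra.
Qed.

Let M_gt0 : 0 < M.
Proof. by have := z_le_M 0%N; have := z_ge0 0%N; lra. Qed.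

(* Above [B + de] the drift forces [c_k de <= M (a_k + b_k)], and [sum c = oo]
   while [sum (a + b) < oo]. *)
Lemma not_eventually_above n de : 0 < de -> ~ (forall k, (n <= k)%N -> B + de < z k).
Proof.
move=> de0 above.
have cde_le k : (n <= k)%N -> c k * de <= M * (a k + b k).
  move=> /above zk; have Bzk : B < z k by lra.
  have := drift Bzk.
  have : c k * de <= c k * (z k - B) by rewrite ler_wpM2l //; lra.
  have : a k * z k <= a k * M by rewrite ler_wpM2l //; have := z_le_M k; lra.
  have : b k * (z k + 1) <= b k * M by rewrite ler_wpM2l.
  lra.
have [m cm] := sum_c_unbounded (\sum_(0 <= k < n) c k + M * (A + S) / de).
have tail_c : (\sum_(n <= k < n + m) c k) * de <= M * (A + S).
  rewrite mulr_suml; apply: le_trans (_ : \sum_(n <= k < n + m) M * (a k + b k) <= _).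
    by apply: ler_sum_nat => k /andP[nk _]; exact: cde_le.
  rewrite -mulr_sumr ler_wpM2l ?(ltW M_gt0) // big_split /= lerD //.
  - exact: le_trans (sum_nat_tail_le _ _ a_ge0) (sum_a_le _).
  - exact: le_trans (sum_nat_tail_le _ _ b_ge0) (sum_b_le _).
have : \sum_(0 <= k < m) c k <= \sum_(0 <= k < n + m) c k.
  by rewrite (big_cat_nat (leq0n m) (leq_addl n m)) lerDl sumr_ge0.
have : \sum_(0 <= k < n + m) c k = \sum_(0 <= k < n) c k + \sum_(n <= k < n + m) c k.
  by rewrite (big_cat_nat (leq0n n) (leq_addr m n)).
move: tail_c; rewrite -ler_pdivlMr //; lra.
Qed.

Lemma weighted_dist_set_cvg0 (p : nat -> R) : (forall n, 0 <= p n) ->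
  weighted_tails_vanish p b ->
  (fun n => p n * dist_set (z n) `[0, B]) @ \oo --> 0.
Proof.
move=> p_ge0 tails; apply/cvgrPdist_le => e e0.
have [N hN] := tails (e / (2 * M)) (divr_gt0 e0 (mulr_gt0 (ltr0Sn _ 1) M_gt0)).
near=> n.
rewrite sub0r normrN ger0_norm ?mulr_ge0 ?dist_set_ge0 //.
have [zB|Bz] := leP (z n) B.
  have : dist_set (z n) `[0, B] <= `|z n - z n|.
    by apply: dist_set_le; rewrite /= in_itv /= z_ge0.
  rewrite subrr normr0 => d0.
  have -> : dist_set (z n) `[0, B] = 0 by apply/le_anti; rewrite d0 dist_set_ge0.
  by rewrite mulr0 ltW.
have : dist_set (z n) `[0, B] <= `|z n - B|.
  by apply: dist_set_le; rewrite /= in_itv /= lexx B_ge0.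
rewrite ger0_norm; last by rewrite subr_ge0 ltW.
move=> /(ler_wpM2l (p_ge0 n)) /le_trans; apply.
rewrite leNgt; apply/negP => far.
have pn_gt0 : 0 < p n.
  rewrite lt_neqAle p_ge0 andbT; apply/eqP => pn0.
  by move: far; rewrite -pn0 mul0r ltNge ltW.
apply: (not_eventually_above (n := n) (de := (z n - B) / 2)); first lra.
move=> k nk; have := relative_increments_descent b_ge0 incr z_le_M nk.
suff : M * \sum_(n <= j < k) b j < (z n - B) / 2 by lra.
have tail : M * (p n * \sum_(n <= j < k) b j) <= M * (e / (2 * M)).
  by rewrite ler_wpM2l ?(ltW M_gt0) //; apply: hN; near: n; exists N.
have half : M * (e / (2 * M)) = e / 2 by field; rewrite gt_eqF.
rewrite -(ltr_pM2l pn_gt0); lra.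
Unshelve. all: by end_near.
Qed.

End DriftTowardsInterval.

Section NonnegSeries.
Variable R : realType.
Local Open Scope ereal_scope.

Lemma nneseries_lt_pinfty_psum_bounded (u : nat -> R) : (forall k, (0 <= u k)%R) ->
  \sum_(0 <= k <oo) (u k)%:E < +oo -> exists A, forall n, (\sum_(0 <= k < n) u k <= A)%R.
Proof.
move=> u0 ult; have u0E k : (0 <= k)%N -> true -> 0 <= (u k)%:E by rewrite lee_fin.
have ufin : \sum_(0 <= k <oo) (u k)%:E \is a fin_num.
  by rewrite ge0_fin_numE // (nneseries_ge0 u0E).
exists (fine (\sum_(0 <= k <oo) (u k)%:E)) => n.
by rewrite -lee_fin fineK // -sumEFin (nneseries_lim_ge _ u0E).
Qed.

Lemma nneseries_pinfty_psum_unbounded (u : nat -> R) : (forall k, (0 <= u k)%R) ->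
  \sum_(0 <= k <oo) (u k)%:E = +oo -> forall C, exists n, (C < \sum_(0 <= k < n) u k)%R.
Proof.
move=> u0 uoo C; apply: contrapT => /forallNP ule.
suff : \sum_(0 <= k <oo) (u k)%:E <= C%:E by rewrite uoo leye_eq.
apply: lime_le; first by apply: is_cvg_nneseries => k _ _; rewrite lee_fin.
by apply: nearW => n; rewrite sumEFin lee_fin leNgt; apply/negP; exact: ule.
Qed.

End NonnegSeries.

Lemma measurable_wrt_measurable_fun d (T : measurableType d) d' (U : measurableType d')
  (G : set (set T)) (f : T -> U) :
  G `<=` measurable -> measurable_wrt G f -> measurable_fun setT f.
Proof. by move=> GM mf _ Y mY; rewrite setTI; apply: GM; exact: mf. Qed.

Lemma measurable_wrtP (T : pointedType) (R : realType) (G : set (set T)) (f : T -> R) :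
  sigma_algebra setT G ->
  measurable_wrt G f <-> measurable_fun (setT : set (g_sigma_algebraType G)) f.
Proof.
move=> sG; split=> [mf _ Y /mf|mf Y /(mf measurableT)];
  by rewrite /measurable /= (sigma_algebra_id sG) setTI.
Qed.

Lemma sigma_algebra_setI (T : pointedType) (G : set (set T)) A B :
  sigma_algebra setT G -> G A -> G B -> G (A `&` B).
Proof.
move=> sG GA GB; have := @measurableI _ (g_sigma_algebraType G) A B.
by rewrite /measurable /= (sigma_algebra_id sG); apply.
Qed.

Section CondExpNonneg.
Context d (T : measurableType d) (R : realType) (P : probability T R).
Variables (G : set (set T)) (X : T -> R) (g : T -> \bar R).
Hypotheses (G_sigma : sigma_algebra setT G) (G_meas : G `<=` measurable)
  (gX : is_cond_exp_nonneg P G X g) (mX : measurable_fun setT X)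
  (X_ge0 : forall t, (0 <= X t)%R).
Local Open Scope ereal_scope.

(* [s P(A) <= int_A X = int_A g <= r P(A)] with [r < s]. *)
Lemma cond_exp_nonneg_gap_null (A : set T) (r s : R) : (r < s)%R -> G A ->
  (forall t, A t -> g t <= r%:E) -> {ae P, forall t, A t -> (s <= X t)%R} -> P A = 0.
Proof.
move=> rs GA gr Xs; have [mg g0 gint] := gX; have mA := G_meas GA.
have r0 t : A t -> (0 <= r)%R by move=> /gr; rewrite -lee_fin; exact: le_trans (g0 t).
have int_g : \int[P]_(t in A) g t <= r%:E * P A.
  rewrite -integral_cst //; apply: ge0_le_integral => //.
  exact: measurable_funS measurableT (subsetT _) (measurable_wrt_measurable_fun G_meas mg).
have int_X : s%:E * P A <= \int[P]_(t in A) (X t)%:E.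
  rewrite -integral_cst //; apply: ae_ge0_le_integral => //.
  - by move=> t /r0 /le_lt_trans /(_ rs) /ltW; rewrite lee_fin.
  - by move=> t _; rewrite lee_fin.
  - exact/measurable_EFinP/(measurable_funS measurableT (subsetT _) mX).
rewrite -(gint _ GA) in int_X; have PA0 := fine_ge0 (measure_ge0 P A).
move: (le_trans int_X int_g); rewrite -(fineK (fin_num_measure P _ mA)) -!EFinM lee_fin.
by move=> sxr; apply/eqP; rewrite eqe; apply/eqP; nra.
Qed.

(* [{g < h}] is the countable union of the null sets [{g < q1} `&` {q2 < h}],
   [q1 < q2] rational. *)
Lemma cond_exp_nonneg_ge (h : T -> R) : measurable_wrt G h ->
  {ae P, forall t, (h t <= X t)%R} -> {ae P, forall t, (h t)%:E <= g t}.
Proof.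
move=> mh hX; have [mg g0 _] := gX.
pose A (q : rat * rat) := [set t | g t < (ratr q.1)%:E] `&` [set t | (ratr q.2 < h t)%R].
have GA q : G (A q).
  apply: sigma_algebra_setI => //.
    rewrite (_ : [set t | _] = g @^-1` [set` `]-oo, (ratr q.1)%:E[]).
      by apply: mg; exact: emeasurable_itv.
    by apply/seteqP; split => t /=; rewrite in_itv.
  rewrite (_ : [set t | _] = h @^-1` [set` `](ratr q.2), +oo[]).
    by apply: mh; exact: measurable_itv.
  by apply/seteqP; split => t /=; rewrite in_itv /= andbT.
have PA q : (ratr q.1 < ratr q.2 :> R)%R -> P (A q) = 0.
  move=> q12; apply: cond_exp_nonneg_gap_null q12 (GA q) _ _.
    by move=> t [/ltW].
  by apply: filterS hX => t hXt [_ /= ht]; apply: ltW; apply: lt_le_trans ht hXt.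
pose B i := let q := odflt (0, 0)%R (unpickle i) in
  if (ratr q.1 < ratr q.2 :> R)%R then A q else set0.
have : P.-negligible (\bigcup_i B i).
  apply: negligible_bigcup => i; rewrite /B; case: ifPn => [q12|_].
    by exists (A (odflt (0, 0)%R (unpickle i))); split; [exact: G_meas | exact: PA|].
  exact: negligible_set0.
apply: negligibleS => t /= /negP; rewrite -ltNge => hg.
have gfin : g t \is a fin_num by rewrite ge0_fin_numE // (lt_le_trans hg) // leey.
rewrite -(fineK gfin) lte_fin in hg.
have [q1] := rat_in_itvoo hg; rewrite in_itv /= => /andP[gq1 q1h].
have [q2] := rat_in_itvoo q1h; rewrite in_itv /= => /andP[q12 q2h].
exists (pickle (q1, q2)) => //; rewrite /B pickleK /= q12; split => //=.
by rewrite -(fineK gfin) lte_fin.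
Qed.

End CondExpNonneg.

Lemma increment_floor_le_cond_exp_bound d (T : measurableType d) (R : realType)
  (P : probability T R) (F : nat -> set (set T)) (z b : nat -> T -> R) (Y : T -> R) n :
  is_filtration F -> nonneg_adapted F z -> nonneg_adapted F b ->
  (exists g, is_cond_exp_nonneg P (F n) (z n.+1) g /\ {ae P, forall t, (g t <= (Y t)%:E)%E}) ->
  {ae P, forall t, `|z n.+1 t - z n t| <= b n t * (z n t + 1)} ->
  {ae P, forall t, z n t - b n t * (z n t + 1) <= Y t}.
Proof.
move=> [F_sigma F_meas _] hz hb [g [gz gY]] incr.
have floor_meas : measurable_wrt (F n) (fun t => z n t - b n t * (z n t + 1)).
  apply: (measurable_wrtP _ (F_sigma n)).2.
  have mz := (measurable_wrtP _ (F_sigma n)).1 (hz n).1.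
  have mb := (measurable_wrtP _ (F_sigma n)).1 (hb n).1.
  by apply: measurable_funB => //; apply: measurable_funM => //; exact: measurable_funD.
have floor_le : {ae P, forall t, z n t - b n t * (z n t + 1) <= z n.+1 t}.
  apply: filterS incr => t; rewrite distrC; have := ler_norm (z n t - z n.+1 t); lra.
have mz1 := measurable_wrt_measurable_fun (F_meas n.+1) (hz n.+1).1.
have := cond_exp_nonneg_ge (F_sigma n) (F_meas n) gz mz1 (fun t => (hz n.+1).2 t) floor_meas floor_le.
by apply: filterS2 gY => t gYt /le_trans /(_ gYt); rewrite lee_fin.
Qed.

Theorem theorem5 (d : measure_display) (T : measurableType d) (R : realType)
  (P : probability T R) (F : nat -> set (set T))
  (z a x y b c : nat -> T -> R) (B eta : R) :
  is_filtration F ->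
  nonneg_adapted F z -> nonneg_adapted F a -> nonneg_adapted F x ->
  nonneg_adapted F y -> nonneg_adapted F b -> nonneg_adapted F c ->
  (forall n, exists g : T -> \bar R,
     is_cond_exp_nonneg P (F n) (z n.+1) g /\
     {ae P, forall t, (g t <= ((1 + a n t) * z n t + x n t - y n t)%:E)%E}) ->
  {ae P, forall t, (\sum_(0 <= k <oo) (a k t)%:E < +oo)%E} ->
  {ae P, forall t, forall n, `|z n.+1 t - z n t| <= b n t * (z n t + 1)} ->
  {ae P, forall t, (\sum_(0 <= k <oo) ((b k t) ^+ 2)%:E < +oo)%E} ->
  0 <= B ->
  {ae P, forall t, forall n, z n t > B -> x n t - y n t <= - (c n t * (z n t - B))} ->
  {ae P, forall t, (\sum_(0 <= k <oo) (c k t)%:E = +oo)%E} ->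
  0 < eta ->
  {ae P, forall t, ((eta / 2)%:E < limn_einf (fun n => (n%:R * c n t)%:E))%E} ->
  {ae P, forall t, (\sum_(0 <= k <oo)
      ((k.+1%:R `^ eta) * ((a k t) ^+ 2 + b k t))%:E < +oo)%E} ->
  {ae P, forall t,
      (fun n => n%:R `^ (eta / 2) * dist_set (z n t) `[0, B]) @ \oo --> 0}.
Proof.
move=> hF hz ha _ _ hb hc hce sum_a incr _ B_ge0 xy_le sum_c eta_gt0 _ sum_w.
have floor : {ae P, forall t n,
    z n t - b n t * (z n t + 1) <= (1 + a n t) * z n t + x n t - y n t}.
  apply: ae_foralln => n; apply: increment_floor_le_cond_exp_bound hF hz hb (hce n) _.
  by apply: filterS incr => t /(_ n).
apply: filterS (filterI floor (filterI incr (filterI sum_a (filterI sum_w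
  (filterI xy_le sum_c))))) => t [floor_t [incr_t [sa [sw [xy_t sc]]]]].
have b0 k : 0 <= b k t := (hb k).2 t.
have b_le k : 0 <= b k t <= a k t ^+ 2 + b k t by rewrite b0 lerDr sqr_ge0.
have w0 k : 0 <= k.+1%:R `^ eta * (a k t ^+ 2 + b k t).
  by rewrite mulr_ge0 ?powR_ge0 // (le_trans (b0 k)) // lerDr sqr_ge0.
have [A sum_a_le] := nneseries_lt_pinfty_psum_bounded (fun k => (ha k).2 t) sa.
have [S sum_w_le] := nneseries_lt_pinfty_psum_bounded w0 sw.
have sum_b_le n : \sum_(0 <= k < n) b k t <= S.
  rewrite (eq_bigr (fun k => k.+1%:R `^ 0 * b k t)) => [|k _]; last by rewrite powRr0 mul1r.
  by apply: powR_weighted_psum_le b_le sum_w_le n; rewrite lexx ltW.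
apply: (weighted_dist_set_cvg0 (fun n => (hz n).2 t) (fun n => (ha n).2 t) b0
  (fun n => (hc n).2 t) B_ge0 incr_t _ sum_a_le sum_b_le
  (nneseries_pinfty_psum_unbounded (fun n => (hc n).2 t) sc)).
- by move=> n /xy_t; have := floor_t n; lra.
- by move=> n; rewrite powR_ge0.
- apply: (powR_weighted_tails_vanish (S := S)) => //; first lra.
  by apply: powR_weighted_psum_le b_le sum_w_le; lra.
Qed.
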